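(* Let $k,n$ be integers with $2\le k\le n$. Then \[ S(n,n-k,k)=\binom{n}{k}-T(n,k+1,k). \] Moreover, if $k\le n-1$, then also $T(n,k+1,k)=C(n,n-k,n-k-1)$, so that $C(n,n-k,n-k-1)=\binom nk - S(n,n-k,k)$.
   Context: A CNF formula over variables $x_1,\dots,x_n$ is a conjunction of clauses, each clause a disjunction of literals (variables or negated variables); the width of a clause is its number of literals; a $k$-CNF is a CNF all of whose clauses have width at most $k$. For an assignment $a\in\{0,1\}^n$, $\mathrm{wt}(a)=\sum_i a_i$ is its Hamming weight. For a formula $F$, $\mathrm{sat}_t(F)$ is the set of satisfying assignments of $F$ of Hamming weight exactly $t$. $F$ is called $t$-admissible if it has no satisfying assignment of Hamming weight less than $t$. $S(n,t,k)$ is the maximum of $|\mathrm{sat}_t(F)|$ over all $t$-admissible $k$-CNF formulas $F$ on $n$ variables. A $k$-set system over a universe $U$ is a collection of $k$-element subsets of $U$; its size is the number of sets. The Turán number $T(n,q,k)$ is the size of the smallest $k$-set system $\mathcal S$ over $[n]$ such that every $q$-element subset of $[n]$ contains at least one member of $\mathcal S$ (if $q>n$ this is vacuous and $T(n,q,k)=0$). The covering number $C(n,q,k)$ is the size of the smallest $q$-set system $\mathcal S$ over $[n]$ such that every $k$-element subset of $[n]$ is contained in at least one member of $\mathcal S$. *)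

From mathcomp Require Import all_boot all_order all_algebra.
Set Implicit Arguments. Unset Strict Implicit. Unset Printing Implicit Defensive.

(* Variables x_1..x_n are indexed by 'I_n.
   A literal is a pair (i, b): (i, true) is x_i, (i, false) is the negation of x_i. *)
Definition literal (n : nat) := ('I_n * bool)%type.
Definition clause (n : nat) := {set literal n}.
Definition cnf (n : nat) := {set clause n}.
Definition assignment (n : nat) := {ffun 'I_n -> bool}.

Definition wt n (a : assignment n) : nat := \sum_(i < n) nat_of_bool (a i).

Definition lit_sat n (a : assignment n) (l : literal n) : bool := a l.1 == l.2.
Definition clause_sat n (a : assignment n) (C : clause n) : bool :=
  [exists l in C, lit_sat a l].
Definition cnf_sat n (a : assignment n) (F : cnf n) : bool :=
  [forall C in F, clause_sat a C].

Definition width n (C : clause n) : nat := #|C|.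
Definition is_kcnf n (k : nat) (F : cnf n) : bool := [forall C in F, width C <= k].

Definition sat_t n (t : nat) (F : cnf n) : {set assignment n} :=
  [set a | cnf_sat a F & wt a == t].

Definition admissible n (t : nat) (F : cnf n) : bool :=
  [forall a : assignment n, cnf_sat a F ==> (t <= wt a)].

(* S(n,t,k): maximum of |sat_t(F)| over t-admissible k-CNF F on n variables.
   (The candidate set is nonempty: the formula consisting of the empty clause
   is admissible and a k-CNF.) *)
Definition S (n t k : nat) : nat :=
  \max_(F : cnf n | admissible t F && is_kcnf k F) #|sat_t t F|.

(* Minimum over a predicate of set systems; the default value (the number of
   all set systems) is an upper bound of every candidate size, and is only
   returned when there are no candidates. *)
Definition min_size n (P : pred {set {set 'I_n}}) : nat :=
  \big[minn/#|[set: {set {set 'I_n}}]|]_(Sy | P Sy) #|Sy|.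

Definition turan_ok n (q k : nat) (Sy : {set {set 'I_n}}) : bool :=
  [forall A in Sy, #|A| == k] &&
  [forall Q : {set 'I_n}, (#|Q| == q) ==> [exists A in Sy, A \subset Q]].
Definition T (n q k : nat) : nat := min_size (@turan_ok n q k).

Definition cover_ok n (q k : nat) (Sy : {set {set 'I_n}}) : bool :=
  [forall A in Sy, #|A| == q] &&
  [forall K : {set 'I_n}, (#|K| == k) ==> [exists A in Sy, K \subset A]].
Definition C (n q k : nat) : nat := min_size (@cover_ok n q k).

(* Identify an assignment with its set of zeros Z, so that weight n - k means
   #|Z| = k.  For a (n-k)-admissible k-CNF F, the k-sets Z whose assignment
   falsifies F form a Turan (k+1, k)-system: a (k+1)-set Q has weight below
   n - k, hence falsifies some clause C of width at most k, and deleting from Q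
   a point j such that x_j is not a literal of C leaves C falsified.
   Conversely the positive k-CNF with one clause per member of a Turan system
   is (n-k)-admissible and is falsified by exactly the members of the system.
   Hence S(n, n-k, k) + T(n, k+1, k) = C(n, k).  Complementation exchanges
   Turan (k+1, k)-systems and (n-k, n-k-1)-coverings. *)

From mathcomp Require Import all_boot all_order all_algebra.
From mathcomp Require Import zify.
Set Implicit Arguments. Unset Strict Implicit. Unset Printing Implicit Defensive.

Section MinSize.
Variable n : nat.
Implicit Types (P Q : pred {set {set 'I_n}}) (Sy : {set {set 'I_n}}).

Lemma card_set_system_lt_default Sy : #|Sy| < #|[set: {set {set 'I_n}}]|.
Proof.
have -> : [set: {set {set 'I_n}}] = powerset [set: {set 'I_n}].
  by apply/setP => A; rewrite inE powersetE subsetT.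
rewrite card_powerset; apply: leq_ltn_trans (ltn_expl _ (ltnSn 1)).
by rewrite cardsT max_card.
Qed.

Lemma min_size_le P Sy : P Sy -> min_size P <= #|Sy|.
Proof.
move=> PSy; rewrite /min_size.
elim: (index_enum _) (mem_index_enum Sy) => //= Sy' s IHs.
rewrite inE big_cons => /orP[/eqP <-|/IHs le_s]; first by rewrite PSy geq_minl.
by case: (P Sy') => //; rewrite geq_min le_s orbT.
Qed.

Lemma min_size_attained P Sy0 : P Sy0 -> exists2 Sy, P Sy & min_size P = #|Sy|.
Proof.
move=> PSy0; have [Sy PSy minSy] := arg_minnP (fun Sy => #|Sy|) PSy0.
exists Sy => //; apply/eqP; rewrite eqn_leq min_size_le //=.
rewrite /min_size; elim/big_ind: _ => [|x y hx hy|Sy' /minSy //].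
- exact: ltnW (card_set_system_lt_default _).
- by rewrite leq_min hx hy.
Qed.

Lemma min_size_mono P Q :
  (forall Sy, P Sy -> exists2 Sy', Q Sy' & #|Sy'| <= #|Sy|) ->
  min_size Q <= min_size P.
Proof.
move=> PQ; have [Sy PSy|P0] := pickP P.
  have [Sy1 PSy1 ->] := min_size_attained PSy.
  have [Sy' QSy' le_Sy'] := PQ _ PSy1.
  exact: leq_trans (min_size_le QSy') le_Sy'.
rewrite {2}/min_size big_pred0 // /min_size.
elim/big_ind: _ => // [x y hx _|Sy _]; first by rewrite geq_min hx.
exact: ltnW (card_set_system_lt_default _).
Qed.

End MinSize.

Section Zeros.
Variable n : nat.

Definition zeros (a : assignment n) : {set 'I_n} := [set i | ~~ a i].
Definition of_zeros (Z : {set 'I_n}) : assignment n := [ffun i => i \notin Z].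

Lemma of_zerosK : cancel of_zeros zeros.
Proof. by move=> Z; apply/setP => i; rewrite !inE ffunE negbK. Qed.

Lemma zerosK : cancel zeros of_zeros.
Proof. by move=> a; apply/ffunP => i; rewrite ffunE inE negbK. Qed.

Lemma card_set_ord_le (Z : {set 'I_n}) : #|Z| <= n.
Proof. by rewrite -[leqRHS](card_ord n) max_card. Qed.

Lemma wt_of_zeros Z : wt (of_zeros Z) = n - #|Z|.
Proof.
have cardZC : #|Z| + #|~: Z| = n by rewrite cardsC card_ord.
suff -> : wt (of_zeros Z) = #|~: Z| by lia.
rewrite /wt -sum1_card [RHS]big_mkcond /=; apply: eq_bigr => i _.
by rewrite ffunE inE; case: (i \in Z).
Qed.

Lemma wt_zeros a : wt a = n - #|zeros a|.
Proof. by rewrite -{1}(zerosK a) wt_of_zeros. Qed.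

End Zeros.

Section Falsified.
Variables n k : nat.
Hypothesis le_kn : k <= n.

Definition falsified_ksets (F : cnf n) : {set {set 'I_n}} :=
  [set Z : {set 'I_n} | (#|Z| == k) && ~~ cnf_sat (of_zeros Z) F].

Lemma card_sat_t_falsified F :
  #|sat_t (n - k) F| + #|falsified_ksets F| = 'C(n, k).
Proof.
have sat_tE : sat_t (n - k) F =
    @of_zeros n @: [set Z : {set 'I_n} | (#|Z| == k) && cnf_sat (of_zeros Z) F].
  apply/setP => a; rewrite inE; apply/andP/imsetP => [[sat_a /eqP wt_a]|].
    exists (zeros a); last by rewrite zerosK.
    rewrite inE zerosK sat_a andbT; apply/eqP.
    by move: wt_a; rewrite wt_zeros; have := card_set_ord_le (zeros a); lia.
  by case=> Z; rewrite inE => /andP[/eqP cardZ satZ] ->; rewrite wt_of_zeros cardZ.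
rewrite sat_tE card_imset; last exact: can_inj (@of_zerosK n).
rewrite -[n in 'C(n, _)](card_ord n) -card_draws.
rewrite -(cardsID [set Z | cnf_sat (of_zeros Z) F] [set Z : {set 'I_n} | #|Z| == k]).
by congr (_ + _); apply: eq_card => Z; rewrite !inE // andbC.
Qed.

Lemma clause_unsat_setD1 (C : clause n) (Q : {set 'I_n}) j :
  ~~ clause_sat (of_zeros Q) C -> (j, true) \notin C ->
  ~~ clause_sat (of_zeros (Q :\ j)) C.
Proof.
move=> unsatC jC; apply: contra unsatC => /exists_inP[[i b] iC].
rewrite /lit_sat /= !ffunE => sat_ib; apply/exists_inP; exists (i, b) => //.
rewrite /lit_sat /= ffunE; have [eq_ij|ne_ij] := eqVneq i j.
  by move: sat_ib iC jC; rewrite eq_ij setD11 => /eqP <- ->.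
by rewrite in_setD1 ne_ij in sat_ib.
Qed.

Lemma falsified_turan_ok F :
  admissible (n - k) F -> is_kcnf k F -> turan_ok k.+1 k (falsified_ksets F).
Proof.
move=> admF kcnfF; apply/andP; split.
  by apply/forall_inP => A; rewrite inE => /andP[].
apply/forallP => Q; apply/implyP => /eqP cardQ.
have unsatQ : ~~ cnf_sat (of_zeros Q) F.
  apply/negP => satQ; have := forallP admF (of_zeros Q).
  by rewrite satQ wt_of_zeros cardQ; have := card_set_ord_le Q; lia.
have [C CF unsatC] : exists2 C, C \in F & ~~ clause_sat (of_zeros Q) C.
  by move: unsatQ; rewrite negb_forall_in => /exists_inP.
have [j jQ jC] : exists2 j, j \in Q & (j, true) \notin C.
  apply/exists_inP; rewrite -negb_forall_in; apply/negP => /forall_inP QC.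
  have := forall_inP kcnfF C CF; rewrite /width leqNgt -cardQ.
  rewrite -(card_imset Q (fun i j => @congr1 _ _ fst _ _ : (i, true) = (j, true) -> i = j)).
  by rewrite subset_leq_card //; apply/subsetP => _ /imsetP[i /QC iC ->].
apply/exists_inP; exists (Q :\ j); last exact: subsetDl.
have cardQj : #|Q :\ j| = k by have := cardsD1 j Q; rewrite jQ cardQ; lia.
rewrite inE cardQj eqxx /= negb_forall_in.
by apply/exists_inP; exists C => //; apply: clause_unsat_setD1.
Qed.

Definition positive_clause (A : {set 'I_n}) : clause n := [set (i, true) | i in A].

Definition positive_cnf (Sy : {set {set 'I_n}}) : cnf n :=
  positive_clause @: Sy.

Lemma cnf_sat_positive Sy a :
  cnf_sat a (positive_cnf Sy) = [forall A in Sy, ~~ (A \subset zeros a)].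
Proof.
apply/forall_inP/forall_inP => sat_a A ASy.
  case/exists_inP: (sat_a _ (imset_f _ ASy)) => _ /imsetP[i iA ->] /eqP ai.
  by apply/subsetPn; exists i; rewrite // inE ai.
case/imsetP: ASy => B BSy ->; case/subsetPn: (sat_a B BSy) => i iB.
rewrite inE negbK => ai; apply/exists_inP; exists (i, true); first exact: imset_f.
by rewrite /lit_sat ai.
Qed.

Section PositiveCnf.
Variable Sy : {set {set 'I_n}}.
Hypothesis turanSy : turan_ok k.+1 k Sy.

Let card_Sy : {in Sy, forall A : {set 'I_n}, #|A| = k}.
Proof. by case/andP: turanSy => /forall_inP cardSy _ A /cardSy/eqP. Qed.

Lemma positive_cnf_kcnf : is_kcnf k (positive_cnf Sy).
Proof.
apply/forall_inP => _ /imsetP[A ASy ->].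
by rewrite /width -[leqRHS](card_Sy ASy) leq_imset_card.
Qed.

Lemma positive_cnf_admissible : admissible (n - k) (positive_cnf Sy).
Proof.
apply/forallP => a; apply/implyP; rewrite cnf_sat_positive => /forall_inP sat_a.
rewrite leqNgt; apply/negP => lt_wt.
have : k.+1 <= #|zeros a|.
  by move: lt_wt; rewrite wt_zeros; have := card_set_ord_le (zeros a); lia.
case/card_geqP => s [uniq_s size_s sub_s].
have cardQ : #|[set x in s]| == k.+1 by rewrite cardsE (card_uniqP uniq_s) size_s.
case/andP: turanSy => _ /forallP/(_ [set x in s])/implyP/(_ cardQ).
case/exists_inP => A ASy AQ; apply: (negP (sat_a A ASy)).
by apply: subset_trans AQ _; apply/subsetP => x; rewrite inE => /sub_s.
Qed.

Lemma falsified_positive_cnf : falsified_ksets (positive_cnf Sy) = Sy.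
Proof.
apply/setP => Z; rewrite inE cnf_sat_positive of_zerosK negb_forall_in.
apply/andP/idP => [[/eqP cardZ /exists_inP[A ASy /negPn AZ]]|ZSy].
  suff <- : A = Z by [].
  by apply/eqP; rewrite eqEcard AZ cardZ (card_Sy ASy) leqnn.
by rewrite (card_Sy ZSy); split=> //; apply/exists_inP; exists Z; rewrite ?subxx.
Qed.

End PositiveCnf.

Lemma turan_ok_ksets : turan_ok k.+1 k [set A : {set 'I_n} | #|A| == k].
Proof.
apply/andP; split; first by apply/forall_inP => A; rewrite inE.
apply/forallP => Q; apply/implyP => /eqP cardQ.
have /card_gt0P[j jQ] : 0 < #|Q| by rewrite cardQ.
apply/exists_inP; exists (Q :\ j); last exact: subsetDl.
by rewrite inE; apply/eqP; have := cardsD1 j Q; rewrite jQ cardQ; lia.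
Qed.

Lemma S_add_T : S n (n - k) k + T n k.+1 k = 'C(n, k).
Proof.
have [Sy turanSy minSy] := min_size_attained turan_ok_ksets.
have S_ge : 'C(n, k) - T n k.+1 k <= S n (n - k) k.
  rewrite /T minSy -(falsified_positive_cnf turanSy).
  rewrite -(card_sat_t_falsified (positive_cnf Sy)) addnK.
  apply: (leq_bigmax_cond (positive_cnf Sy)).
  by rewrite positive_cnf_admissible ?positive_cnf_kcnf.
have S_le : S n (n - k) k <= 'C(n, k) - T n k.+1 k.
  apply/bigmax_leqP => F /andP[admF kcnfF].
  have := min_size_le (falsified_turan_ok admF kcnfF).
  by have := card_sat_t_falsified F; rewrite /T; lia.
have T_le : T n k.+1 k <= 'C(n, k).
  by rewrite -[n in 'C(n, _)](card_ord n) -card_draws min_size_le ?turan_ok_ksets.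
lia.
Qed.

End Falsified.

Section Complement.
Variables n k : nat.
Hypothesis lt_kn : k < n.

Definition complements (Sy : {set {set 'I_n}}) : {set {set 'I_n}} := [set ~: A | A in Sy].

Lemma card_complements Sy : #|complements Sy| = #|Sy|.
Proof. exact/card_imset/setC_inj. Qed.

Lemma card_setC_ord (A : {set 'I_n}) : #|~: A| = n - #|A|.
Proof. by rewrite cardsCs setCK card_ord. Qed.

Lemma turan_ok_complements Sy :
  turan_ok k.+1 k Sy -> cover_ok (n - k) (n - k - 1) (complements Sy).
Proof.
case/andP => /forall_inP cardSy /forallP turanSy; apply/andP; split.
  by apply/forall_inP => _ /imsetP[A /cardSy/eqP cardA ->]; rewrite card_setC_ord cardA.
apply/forallP => K; apply/implyP => /eqP cardK.
have cardKC : #|~: K| == k.+1.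
  by rewrite card_setC_ord cardK; apply/eqP; lia.
case/exists_inP: (implyP (turanSy _) cardKC) => A ASy AK.
by apply/exists_inP; exists (~: A); rewrite ?imset_f // subsetC.
Qed.

Lemma cover_ok_complements Sy :
  cover_ok (n - k) (n - k - 1) Sy -> turan_ok k.+1 k (complements Sy).
Proof.
case/andP => /forall_inP cardSy /forallP coverSy; apply/andP; split.
  apply/forall_inP => _ /imsetP[A /cardSy/eqP cardA ->].
  by rewrite card_setC_ord cardA; apply/eqP; lia.
apply/forallP => Q; apply/implyP => /eqP cardQ.
have cardQC : #|~: Q| == n - k - 1.
  by rewrite card_setC_ord cardQ; apply/eqP; lia.
case/exists_inP: (implyP (coverSy _) cardQC) => A ASy QA.
by apply/exists_inP; exists (~: A); rewrite ?imset_f // subCset.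
Qed.

Lemma T_eq_C : T n k.+1 k = C n (n - k) (n - k - 1).
Proof.
apply/eqP; rewrite eqn_leq; apply/andP; split; apply: min_size_mono => Sy okSy.
  by exists (complements Sy); rewrite ?cover_ok_complements ?card_complements.
by exists (complements Sy); rewrite ?turan_ok_complements ?card_complements.
Qed.

End Complement.

Theorem theorem1 (n k : nat) (hk2 : 2 <= k) (hkn : k <= n) :
  ((S n (n - k) k)%:Z = ('C(n, k))%:Z - (T n k.+1 k)%:Z)%R /\
  (k <= n - 1 ->
     T n k.+1 k = C n (n - k) (n - k - 1) /\
     ((C n (n - k) (n - k - 1))%:Z = ('C(n, k))%:Z - (S n (n - k) k)%:Z)%R).
Proof.
have S_T := S_add_T hkn.
split; first lia.
move=> le_k_pred_n; have T_C : T n k.+1 k = C n (n - k) (n - k - 1).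
  by apply: T_eq_C; lia.
by split=> //; rewrite -T_C; lia.
Qed.
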